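(* Let $m\ge1$ and $0\le k\le m$. In $G_{m,k}$ put $A_i=a_{i+1}^{-1}a_i$ for $1\le i\le m$ and $B_j=a_{m+j+1}^{-1}a_j$ for $1\le j\le k$. Then the elements $A_1,\dots,A_m,B_1,\dots,B_k$ freely generate a free normal subgroup $F_{m+k}$ (the kernel of the homomorphism $G_{m,k}\to\mathbb Z$ sending every $a_i$ to $1$), and $G_{m,k}\cong F_{m+k}\rtimes_{\phi_{m,k}}\mathbb Z$ with $\mathbb Z=\langle a_1\rangle$, where the monodromy automorphism $\phi_{m,k}(x)=a_1xa_1^{-1}$ is given by $\phi_{m,k}(A_i)=A_1A_2\cdots A_{i-1}\,A_i\,A_{i-1}^{-1}\cdots A_1^{-1}$ for $1\le i\le m$ (so $\phi_{m,k}(A_1)=A_1$), and $\phi_{m,k}(B_j)=A_1A_2\cdots A_m\,(B_1B_2\cdots B_j)\,A_{j-1}^{-1}A_{j-2}^{-1}\cdots A_1^{-1}$ for $1\le j\le k$ (so $\phi_{m,k}(B_1)=A_1\cdots A_mB_1$). Furthermore, $\phi_{m,k}$ is the restriction of $\phi_{m,m}$ to $F_{m+k}$.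
   Context: $G_{m,k}=\langle a_1,\dots,a_{m+k+1}\mid [a_i,a_{i+1}]=1\ (1\le i\le m),\ a_{m+j+1}^{-1}a_ja_{m+j+1}=a_{m+j}\ (1\le j\le k)\rangle$. *)

From Stdlib Require Import ZArith Arith.

Record group := Group {
  gcar :> Type;
  gmul : gcar -> gcar -> gcar;
  gone : gcar;
  ginv : gcar -> gcar;
  gmulA : forall x y z, gmul x (gmul y z) = gmul (gmul x y) z;
  gmul1 : forall x, gmul gone x = x;
  gmulg1 : forall x, gmul x gone = x;
  gmulV : forall x, gmul (ginv x) x = gone;
  gmulgV : forall x, gmul x (ginv x) = gone
}.
Arguments gmul {g}. Arguments gone {g}. Arguments ginv {g}.

Definition is_hom (G H : group) (f : G -> H) : Prop :=
  forall x y : G, f (gmul x y) = gmul (f x) (f y).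

Fixpoint npow {G : group} (x : G) (n : nat) : G :=
  match n with 0 => gone | S n => gmul (npow x n) x end.
Definition zpow {G : group} (x : G) (z : Z) : G :=
  match z with
  | Z0 => gone
  | Zpos p => npow x (Pos.to_nat p)
  | Zneg p => ginv (npow x (Pos.to_nat p))
  end.

Fixpoint gprod {G : group} (f : nat -> G) (n : nat) : G :=
  match n with 0 => gone | S n => gmul (gprod f n) (f (S n)) end.

Inductive gen {G : group} (S : G -> Prop) : G -> Prop :=
  | gen_base x : S x -> gen S x
  | gen_one : gen S gone
  | gen_mul x y : gen S x -> gen S y -> gen S (gmul x y)
  | gen_inv x : gen S x -> gen S (ginv x).

Definition gen_fam {G : group} (n : nat) (s : nat -> G) : G -> Prop :=
  gen (fun x => exists i, i < n /\ x = s i).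

Definition freely_generates {G : group} (n : nat) (s : nat -> G) : Prop :=
  forall (H : group) (t : nat -> H),
    (exists f : G -> H,
       (forall x y, gen_fam n s x -> gen_fam n s y -> f (gmul x y) = gmul (f x) (f y))
       /\ (forall i, i < n -> f (s i) = t i))
    /\ (forall f1 f2 : G -> H,
          (forall x y, gen_fam n s x -> gen_fam n s y -> f1 (gmul x y) = gmul (f1 x) (f1 y)) ->
          (forall x y, gen_fam n s x -> gen_fam n s y -> f2 (gmul x y) = gmul (f2 x) (f2 y)) ->
          (forall i, i < n -> f1 (s i) = t i) ->
          (forall i, i < n -> f2 (s i) = t i) ->
          forall x, gen_fam n s x -> f1 x = f2 x).

Definition Gmk_rels (m k : nat) (G : group) (a : nat -> G) : Prop :=
  (forall i, 1 <= i <= m -> gmul (a i) (a (i + 1)) = gmul (a (i + 1)) (a i)) /\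
  (forall j, 1 <= j <= k ->
     gmul (gmul (ginv (a (m + j + 1))) (a j)) (a (m + j + 1)) = a (m + j)).

Definition presents_Gmk (m k : nat) (G : group) (a : nat -> G) : Prop :=
  Gmk_rels m k G a /\
  forall (H : group) (b : nat -> H), Gmk_rels m k H b ->
    (exists f : G -> H, is_hom G H f /\ forall i, 1 <= i <= m + k + 1 -> f (a i) = b i) /\
    (forall f1 f2 : G -> H, is_hom G H f1 -> is_hom G H f2 ->
       (forall i, 1 <= i <= m + k + 1 -> f1 (a i) = b i) ->
       (forall i, 1 <= i <= m + k + 1 -> f2 (a i) = b i) ->
       forall x, f1 x = f2 x).

Definition Aelt {G : group} (a : nat -> G) (i : nat) : G := gmul (ginv (a (i + 1))) (a i).
Definition Belt {G : group} (m : nat) (a : nat -> G) (j : nat) : G :=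
  gmul (ginv (a (m + j + 1))) (a j).

(** The family (0-indexed) A_1, ..., A_m, B_1, ..., B_k *)
Definition basis {G : group} (m : nat) (a : nat -> G) (i : nat) : G :=
  if i <? m then Aelt a (i + 1) else Belt m a (i - m + 1).

Definition conj1 {G : group} (a : nat -> G) (x : G) : G := gmul (gmul (a 1) x) (ginv (a 1)).

(* Each relator of G_{m,k} has the form a_{s(n)} a_{n+1} = a_{n+1} a_n with s(n) <= n
   (s(n) = n for n <= m and s(m+j) = j).  Put x_i = a_{i+1} a_{i+2}^{-1}, so that
   c_n = x_0 ... x_{n-1} = a_1 a_{n+1}^{-1}; for G_{m,k} the x_i are the A_i and B_j, and
   the relators say that conjugation by a_1 sends x_i to c_{i+1} c_{s(i+1)-1}^{-1}.  On the
   free group F on the x_i this formula defines an endomorphism phi, invertible because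
   s(n) <= n makes it triangular, so F ⋊_phi Z satisfies the relations with
   a_n = (c_{n-1}^{-1}, 1).  The evident map F ⋊_phi Z -> G is a left inverse of the
   induced map G -> F ⋊_phi Z, which gives freeness, the kernel and the splitting at once.
   The map G_{m,k} -> G_{m,m}, a_i |-> a_i, sends the free basis of F_{m+k} into that of
   F_{2m}, hence is injective on F_{m+k}. *)

From Stdlib Require Import ZArith Arith Lia List Bool Eqdep_dec.
Import ListNotations.

Section GroupLaws.
Variable G : group.
Implicit Types x y z : G.

Lemma gmulK x y : gmul (gmul x y) (ginv y) = x.
Proof. rewrite <- gmulA, gmulgV, gmulg1. reflexivity. Qed.

Lemma gmulKV x y : gmul (gmul x (ginv y)) y = x.
Proof. rewrite <- gmulA, gmulV, gmulg1. reflexivity. Qed.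

Lemma gmul_cancel_l x y z : gmul x y = gmul x z -> y = z.
Proof.
  intro E. rewrite <- (gmul1 _ y), <- (gmul1 _ z), <- (gmulV _ x), <- !gmulA, E.
  reflexivity.
Qed.

Lemma ginv_unique x y : gmul x y = gone -> ginv x = y.
Proof. intro E. apply (gmul_cancel_l x). rewrite gmulgV, E. reflexivity. Qed.

Lemma ginv_unique_l x y : gmul y x = gone -> ginv x = y.
Proof. intro E. rewrite <- (gmulK y x), E, gmul1. reflexivity. Qed.

Lemma ginvM x y : ginv (gmul x y) = gmul (ginv y) (ginv x).
Proof. apply ginv_unique. rewrite !gmulA, gmulK, gmulgV. reflexivity. Qed.

Lemma ginvK x : ginv (ginv x) = x.
Proof. apply ginv_unique, gmulV. Qed.

Lemma ginv1 : ginv (@gone G) = gone.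
Proof. apply ginv_unique, gmul1. Qed.

End GroupLaws.

Ltac gsimpl :=
  repeat rewrite ?ginvM, ?ginvK, ?ginv1, ?gmulA, ?gmulV, ?gmulgV, ?gmul1, ?gmulg1,
    ?gmulK, ?gmulKV.

Section Homomorphisms.
Variables G K : group.
Implicit Types (x y : G) (f : G -> K).

Lemma hom_one_of f : f (gmul gone gone) = gmul (f gone) (f gone) -> f gone = gone.
Proof.
  rewrite gmul1. intro E. apply (gmul_cancel_l _ (f gone)). rewrite gmulg1.
  symmetry. exact E.
Qed.

Lemma hom_inv_of f x :
  f gone = gone -> f (gmul (ginv x) x) = gmul (f (ginv x)) (f x) -> f (ginv x) = ginv (f x).
Proof.
  rewrite gmulV. intros E1 E2. symmetry. apply ginv_unique_l. congruence.
Qed.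

Lemma hom_one f : is_hom G K f -> f gone = gone.
Proof. intro Hf. apply hom_one_of, Hf. Qed.

Lemma hom_inv f x : is_hom G K f -> f (ginv x) = ginv (f x).
Proof. intro Hf. apply hom_inv_of; [apply hom_one|apply Hf]; exact Hf. Qed.

Lemma gen_hom_ext (S : G -> Prop) f1 f2 :
  (forall x y, gen S x -> gen S y -> f1 (gmul x y) = gmul (f1 x) (f1 y)) ->
  (forall x y, gen S x -> gen S y -> f2 (gmul x y) = gmul (f2 x) (f2 y)) ->
  (forall x, S x -> f1 x = f2 x) -> forall x, gen S x -> f1 x = f2 x.
Proof.
  intros H1 H2 HS x Hx.
  assert (E1 : f1 gone = gone) by (apply hom_one_of, H1; apply gen_one).
  assert (E2 : f2 gone = gone) by (apply hom_one_of, H2; apply gen_one).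
  induction Hx as [x Sx| |x y Hx IHx Hy IHy|x Hx IHx].
  - auto.
  - congruence.
  - rewrite H1, H2 by assumption. congruence.
  - assert (Vx : gen S (ginv x)) by (apply gen_inv, Hx).
    rewrite (hom_inv_of f1), (hom_inv_of f2) by (auto; apply H1 || apply H2; auto).
    congruence.
Qed.

Lemma hom_gen (f : G -> K) (S : G -> Prop) (T : K -> Prop) :
  is_hom G K f -> (forall x, S x -> gen T (f x)) -> forall x, gen S x -> gen T (f x).
Proof.
  intros Hf HS x Hx. induction Hx.
  - auto.
  - rewrite (hom_one f Hf). apply gen_one.
  - rewrite Hf. apply gen_mul; assumption.
  - rewrite (hom_inv f _ Hf). apply gen_inv; assumption.
Qed.

End Homomorphisms.

Lemma free_hom_injective (G K : group) (f : G -> K) (n n' : nat)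
  (s : nat -> G) (s' : nat -> K) :
  is_hom G K f -> n <= n' -> freely_generates n' s' -> (forall i, i < n -> f (s i) = s' i) ->
  forall g h, gen_fam n s g -> gen_fam n s h -> f g = f h -> g = h.
Proof.
  intros f_hom Hn free' f_s.
  assert (f_into : forall g, gen_fam n s g -> gen_fam n' s' (f g)).
  { apply hom_gen; [exact f_hom|]. intros g [i [Hi ->]].
    rewrite f_s by exact Hi. apply gen_base. exists i. split; [lia|reflexivity]. }
  destruct (free' G (fun i => if i <? n then s i else gone)) as [[r [r_hom r_s']] _].
  assert (rK : forall g, gen_fam n s g -> r (f g) = g).
  { apply (gen_hom_ext _ _ _ (fun g => r (f g)) (fun g => g)).
    - intros g h Hg Hh. rewrite f_hom. apply r_hom; apply f_into; assumption.
    - intros g h _ _. reflexivity.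
    - intros g [i [Hi ->]]. rewrite f_s, r_s' by lia.
      destruct (Nat.ltb_spec i n); [reflexivity|lia]. }
  intros g h Hg Hh E. rewrite <- (rK g Hg), <- (rK h Hh), E. reflexivity.
Qed.

(** * Free groups *)

Definition letter := (nat * bool)%type.

Definition letter_inv (l : letter) : letter := (fst l, negb (snd l)).

Lemma letter_invK l : letter_inv (letter_inv l) = l.
Proof. destruct l as [n b]. unfold letter_inv. simpl. rewrite negb_involutive. reflexivity. Qed.

Definition letter_eq_dec (l1 l2 : letter) : {l1 = l2} + {l1 <> l2}.
Proof. decide equality; [apply bool_dec | apply Nat.eq_dec]. Qed.

Definition cons_red (l : letter) (w : list letter) : list letter :=
  match w with
  | h :: t => if letter_eq_dec h (letter_inv l) then t else l :: w
  | [] => [l]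
  end.

Fixpoint reduced (w : list letter) : bool :=
  match w with
  | h1 :: (h2 :: _) as t => if letter_eq_dec h2 (letter_inv h1) then false else reduced t
  | _ => true
  end.

Definition word_mul (u w : list letter) : list letter := fold_right cons_red w u.

Definition word_inv (w : list letter) : list letter := rev (map letter_inv w).

Lemma reduced_tail h t : reduced (h :: t) = true -> reduced t = true.
Proof. destruct t as [|h2 t]; simpl; [reflexivity|]. destruct letter_eq_dec; easy. Qed.

Lemma cons_red_reduced h t : reduced (h :: t) = true -> cons_red h t = h :: t.
Proof. destruct t as [|h2 t]; simpl; [reflexivity|]. destruct letter_eq_dec; easy. Qed.

Lemma reduced_cons_red l w : reduced w = true -> reduced (cons_red l w) = true.
Proof.
  intro Hw. destruct w as [|h t]; simpl; [reflexivity|].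
  destruct (letter_eq_dec h (letter_inv l)) as [E|E].
  - exact (reduced_tail h t Hw).
  - simpl. destruct (letter_eq_dec h (letter_inv l)); [contradiction|exact Hw].
Qed.

Lemma cons_red_invK l w : reduced w = true -> cons_red (letter_inv l) (cons_red l w) = w.
Proof.
  intro Hw. destruct w as [|h t]; simpl.
  - rewrite letter_invK. destruct letter_eq_dec; [reflexivity|contradiction].
  - destruct (letter_eq_dec h (letter_inv l)) as [->|E].
    + rewrite <- (cons_red_reduced _ _ Hw). simpl. destruct t as [|h2 t]; [reflexivity|].
      simpl in Hw |- *. rewrite letter_invK in Hw |- *.
      destruct letter_eq_dec; [discriminate|reflexivity].
    + simpl. rewrite letter_invK. destruct letter_eq_dec; [reflexivity|contradiction].
Qed.

Lemma reduced_word_mul u w : reduced w = true -> reduced (word_mul u w) = true.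
Proof. intro Hw. induction u; simpl; auto using reduced_cons_red. Qed.

Lemma word_mul_cons_red l v w :
  reduced w = true -> word_mul (cons_red l v) w = cons_red l (word_mul v w).
Proof.
  intro Hw. destruct v as [|h t]; simpl; [reflexivity|].
  destruct (letter_eq_dec h (letter_inv l)) as [->|]; [|reflexivity].
  pose proof (cons_red_invK (letter_inv l) (word_mul t w)) as E.
  rewrite letter_invK in E. rewrite E; [reflexivity|apply reduced_word_mul, Hw].
Qed.

Lemma word_mul_assoc u v w :
  reduced w = true -> word_mul (word_mul u v) w = word_mul u (word_mul v w).
Proof.
  intro Hw. induction u as [|l u IH]; simpl; [reflexivity|].
  rewrite word_mul_cons_red by exact Hw. rewrite IH. reflexivity.
Qed.

Lemma word_mul_nil_r w : reduced w = true -> word_mul w [] = w.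
Proof.
  induction w as [|h t IH]; intro Hw; simpl; [reflexivity|].
  rewrite IH by exact (reduced_tail h t Hw). exact (cons_red_reduced h t Hw).
Qed.

Lemma word_mul_app u1 u2 w : word_mul (u1 ++ u2) w = word_mul u1 (word_mul u2 w).
Proof. apply fold_right_app. Qed.

Lemma word_mul_inv_app_r w v : word_mul w (word_inv w ++ v) = v.
Proof.
  revert v. induction w as [|l w IH]; intro v; simpl; [reflexivity|].
  unfold word_inv in *. simpl. rewrite <- app_assoc. simpl. rewrite IH. simpl.
  destruct letter_eq_dec; [reflexivity|contradiction].
Qed.

Lemma word_mul_inv_app_l w v : word_mul (word_inv w) (w ++ v) = v.
Proof.
  revert v. induction w as [|l w IH]; intro v; simpl; [reflexivity|].
  unfold word_inv in *. simpl. rewrite word_mul_app. simpl.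
  rewrite letter_invK. destruct letter_eq_dec; [apply IH|contradiction].
Qed.

Definition free_word := { w : list letter | reduced w = true }.

Lemma free_word_eq (x y : free_word) : proj1_sig x = proj1_sig y -> x = y.
Proof.
  destruct x as [x hx], y as [y hy]; simpl. intros ->. f_equal. apply UIP_dec, bool_dec.
Qed.

Definition fw_mul (x y : free_word) : free_word :=
  exist _ (word_mul (proj1_sig x) (proj1_sig y)) (reduced_word_mul _ _ (proj2_sig y)).

Definition fw_one : free_word := exist _ [] eq_refl.

(* [word_inv] of a reduced word is reduced; multiplying it onto [[]] spares proving so. *)
Definition fw_inv (x : free_word) : free_word :=
  exist _ (word_mul (word_inv (proj1_sig x)) []) (reduced_word_mul _ [] eq_refl).

Lemma fw_mulA x y z : fw_mul x (fw_mul y z) = fw_mul (fw_mul x y) z.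
Proof. apply free_word_eq. simpl. rewrite word_mul_assoc; [reflexivity|apply (proj2_sig z)]. Qed.

Lemma fw_mul1 x : fw_mul fw_one x = x.
Proof. apply free_word_eq. reflexivity. Qed.

Lemma fw_mulg1 x : fw_mul x fw_one = x.
Proof. apply free_word_eq. apply word_mul_nil_r, (proj2_sig x). Qed.

Lemma fw_mulV x : fw_mul (fw_inv x) x = fw_one.
Proof.
  apply free_word_eq. simpl. rewrite word_mul_assoc by apply (proj2_sig x).
  rewrite <- (app_nil_r (proj1_sig x)) at 2. apply word_mul_inv_app_l.
Qed.

Lemma fw_mulgV x : fw_mul x (fw_inv x) = fw_one.
Proof.
  apply free_word_eq. simpl. rewrite <- word_mul_assoc by reflexivity.
  rewrite <- (app_nil_r (word_inv _)). rewrite word_mul_inv_app_r. reflexivity.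
Qed.

Definition free_group : group :=
  Group free_word fw_mul fw_one fw_inv fw_mulA fw_mul1 fw_mulg1 fw_mulV fw_mulgV.

Definition fg_letter (l : letter) : free_group := exist _ [l] eq_refl.

Definition fg_gen (n : nat) : free_group := fg_letter (n, false).

Lemma fg_letter_inv n : fg_letter (n, true) = ginv (fg_gen n).
Proof. apply free_word_eq. reflexivity. Qed.

Lemma free_group_generated (x : free_group) : gen (fun y => exists n, y = fg_gen n) x.
Proof.
  destruct x as [w hw]. induction w as [|[n b] w IH].
  - replace (exist _ [] hw) with (@gone free_group) by (apply free_word_eq; reflexivity).
    apply gen_one.
  - assert (E : exist _ _ hw
                = gmul (fg_letter (n, b)) (exist _ w (reduced_tail _ _ hw) : free_group)).
    { apply free_word_eq. symmetry. exact (cons_red_reduced _ _ hw). }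
    rewrite E. apply gen_mul; [|apply IH].
    destruct b; [rewrite fg_letter_inv; apply gen_inv|]; apply gen_base; exists n; reflexivity.
Qed.

Section FreeLift.
Variables (K : group) (t : nat -> K).

Definition lift_letter (l : letter) : K := if snd l then ginv (t (fst l)) else t (fst l).

Definition lift_word (w : list letter) : K :=
  fold_right (fun l acc => gmul (lift_letter l) acc) gone w.

Lemma lift_word_cons_red l w : lift_word (cons_red l w) = gmul (lift_letter l) (lift_word w).
Proof.
  destruct w as [|h w]; simpl; [reflexivity|].
  destruct (letter_eq_dec h (letter_inv l)) as [->|]; [|reflexivity].
  destruct l as [n []]; cbn; gsimpl; reflexivity.
Qed.

Lemma lift_word_mul u w : lift_word (word_mul u w) = gmul (lift_word u) (lift_word w).
Proof.
  induction u as [|l u IH]; simpl; [symmetry; apply gmul1|].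
  rewrite lift_word_cons_red. fold (word_mul u w). rewrite IH. apply gmulA.
Qed.

Definition fg_lift (x : free_group) : K := lift_word (proj1_sig x).

Lemma fg_lift_hom : is_hom free_group K fg_lift.
Proof. intros x y. apply lift_word_mul. Qed.

Lemma fg_lift_gen n : fg_lift (fg_gen n) = t n.
Proof. apply gmulg1. Qed.

End FreeLift.

Lemma fg_hom_ext (K : group) (f1 f2 : free_group -> K) :
  is_hom _ K f1 -> is_hom _ K f2 -> (forall n, f1 (fg_gen n) = f2 (fg_gen n)) ->
  forall x, f1 x = f2 x.
Proof.
  intros H1 H2 E x. apply (gen_hom_ext _ _ (fun y => exists n, y = fg_gen n) f1 f2);
    auto using free_group_generated.
  intros y [n ->]. apply E.
Qed.

Lemma fg_lift_in_gen (K : group) (t : nat -> K) (S : K -> Prop) :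
  (forall n, gen S (t n)) -> forall x, gen S (fg_lift K t x).
Proof.
  intros Ht x. apply (hom_gen _ _ _ (fun y => exists n, y = fg_gen n));
    auto using fg_lift_hom, free_group_generated.
  intros y [n ->]. rewrite fg_lift_gen. apply Ht.
Qed.

(** * Integer powers and semidirect products with Z *)

Section IntegerIterate.
Variables (T : Type) (p q : T -> T).
Hypotheses (pK : forall y, q (p y) = y) (qK : forall y, p (q y) = y).

Definition ziter (z : Z) (x : T) : T :=
  if (0 <=? z)%Z then Nat.iter (Z.to_nat z) p x else Nat.iter (Z.to_nat (- z)) q x.

Lemma ziter_nonpos z x : (z <= 0)%Z -> ziter z x = Nat.iter (Z.to_nat (- z)) q x.
Proof.
  intro Hz. unfold ziter. destruct (Z.leb_spec 0 z); [|reflexivity].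
  replace z with 0%Z by lia. reflexivity.
Qed.

Lemma ziter_succ z x : ziter (Z.succ z) x = p (ziter z x).
Proof.
  destruct (Z.le_gt_cases 0 z).
  - unfold ziter. destruct (Z.leb_spec 0 (Z.succ z)), (Z.leb_spec 0 z); try lia.
    rewrite Z2Nat.inj_succ by lia. apply Nat.iter_succ.
  - rewrite !ziter_nonpos by lia.
    replace (Z.to_nat (- z)) with (S (Z.to_nat (- Z.succ z))) by lia.
    rewrite Nat.iter_succ, qK. reflexivity.
Qed.

Lemma ziter_pred z x : ziter (Z.pred z) x = q (ziter z x).
Proof.
  destruct (Z.le_gt_cases z 0).
  - rewrite !ziter_nonpos by lia.
    replace (Z.to_nat (- Z.pred z)) with (S (Z.to_nat (- z))) by lia. apply Nat.iter_succ.
  - unfold ziter. destruct (Z.leb_spec 0 (Z.pred z)), (Z.leb_spec 0 z); try lia.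
    replace (Z.to_nat z) with (S (Z.to_nat (Z.pred z))) by lia.
    rewrite Nat.iter_succ, pK. reflexivity.
Qed.

Lemma ziter_add z1 z2 x : ziter (z1 + z2) x = ziter z1 (ziter z2 x).
Proof.
  induction z1 as [|z1 IH|z1 IH] using Z.peano_ind; [reflexivity| |].
  - rewrite Z.add_succ_l, !ziter_succ, IH. reflexivity.
  - rewrite Z.add_pred_l, !ziter_pred, IH. reflexivity.
Qed.

End IntegerIterate.

Arguments ziter {T}.

Lemma ziter_hom (K : group) (p q : K -> K) z :
  is_hom K K p -> is_hom K K q -> is_hom K K (ziter p q z).
Proof.
  intros Hp Hq x y. unfold ziter. destruct (0 <=? z)%Z;
    [generalize (Z.to_nat z) | generalize (Z.to_nat (- z))];
    intro n; induction n as [|n IH]; simpl; rewrite ?IH; auto.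
Qed.

Section Powers.
Variable G : group.
Implicit Types x y : G.

Lemma npow_comm x n : gmul (npow x n) x = gmul x (npow x n).
Proof.
  induction n as [|n IH]; simpl; [rewrite gmul1, gmulg1; reflexivity|].
  rewrite IH at 1. symmetry. apply gmulA.
Qed.

Definition rmul x y : G := gmul y x.

Lemma iter_rmul x n y : Nat.iter n (rmul x) y = gmul y (Nat.iter n (rmul x) gone).
Proof.
  induction n as [|n IH]; simpl; [symmetry; apply gmulg1|].
  unfold rmul at 1 3. rewrite IH. symmetry. apply gmulA.
Qed.

Lemma zpow_ziter x z : zpow x z = ziter (rmul x) (rmul (ginv x)) z gone.
Proof.
  destruct z as [|n|n]; unfold ziter; simpl; [reflexivity| |];
    induction (Pos.to_nat n) as [|j IH]; simpl.
  - reflexivity.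
  - rewrite <- IH. reflexivity.
  - apply ginv1.
  - rewrite <- IH. unfold rmul at 1. rewrite npow_comm, ginvM. reflexivity.
Qed.

Lemma ziter_rmul x z y :
  ziter (rmul x) (rmul (ginv x)) z y = gmul y (ziter (rmul x) (rmul (ginv x)) z gone).
Proof. unfold ziter. destruct (0 <=? z)%Z; apply iter_rmul. Qed.

Lemma zpow_add x z1 z2 : zpow x (z1 + z2) = gmul (zpow x z1) (zpow x z2).
Proof.
  rewrite Z.add_comm, !zpow_ziter, ziter_add, ziter_rmul; [reflexivity|intro..];
    apply gmulK || apply gmulKV.
Qed.

Lemma zpow_succ_l x z : zpow x (Z.succ z) = gmul x (zpow x z).
Proof.
  replace (Z.succ z) with (1 + z)%Z by lia. rewrite zpow_add. simpl. rewrite gmul1. reflexivity.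
Qed.

Lemma zpow_pred_l x z : zpow x (Z.pred z) = gmul (ginv x) (zpow x z).
Proof.
  replace (Z.pred z) with (-1 + z)%Z by lia. rewrite zpow_add. simpl. rewrite gmul1. reflexivity.
Qed.

Lemma zpow_succ_r x z : zpow x (Z.succ z) = gmul (zpow x z) x.
Proof.
  replace (Z.succ z) with (z + 1)%Z by lia. rewrite zpow_add. simpl. rewrite gmul1. reflexivity.
Qed.

Lemma zpow_pred_r x z : zpow x (Z.pred z) = gmul (zpow x z) (ginv x).
Proof.
  replace (Z.pred z) with (z + -1)%Z by lia. rewrite zpow_add. simpl. rewrite gmul1. reflexivity.
Qed.

End Powers.

Section IntegerValuedHoms.
Variables (G : group) (f : G -> Z).
Hypothesis f_hom : forall x y, f (gmul x y) = (f x + f y)%Z.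

Lemma zhom_one : f gone = 0%Z.
Proof. pose proof (f_hom gone gone) as E. rewrite gmul1 in E. lia. Qed.

Lemma zhom_inv x : f (ginv x) = (- f x)%Z.
Proof. pose proof (f_hom (ginv x) x) as E. rewrite gmulV, zhom_one in E. lia. Qed.

Lemma zhom_zpow x z : f (zpow x z) = (z * f x)%Z.
Proof.
  induction z as [|z IH|z IH] using Z.peano_ind.
  - apply zhom_one.
  - rewrite zpow_succ_r, f_hom, IH. lia.
  - rewrite zpow_pred_r, f_hom, zhom_inv, IH. lia.
Qed.

Lemma zpow_inj_of_degree t z : f t = 1%Z -> zpow t z = gone -> z = 0%Z.
Proof.
  intros Ht E. pose proof (f_equal f E) as Ef. rewrite zhom_zpow, Ht, zhom_one in Ef. lia.
Qed.

End IntegerValuedHoms.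

Section SemidirectByZ.
Variables (K : group) (phi psi : K -> K).
Hypotheses (phi_hom : is_hom K K phi)
  (phiK : forall x, psi (phi x) = x) (psiK : forall x, phi (psi x) = x).

Lemma inverse_hom : is_hom K K psi.
Proof.
  intros x y. rewrite <- (psiK x) at 1. rewrite <- (psiK y) at 1.
  rewrite <- phi_hom. apply phiK.
Qed.

Definition zaut (z : Z) : K -> K := ziter phi psi z.

Lemma zaut_hom z : is_hom K K (zaut z).
Proof. apply ziter_hom; [exact phi_hom | exact inverse_hom]. Qed.

Lemma zaut_one x : zaut 1 x = phi x.
Proof. reflexivity. Qed.

Lemma zaut_add z1 z2 x : zaut (z1 + z2) x = zaut z1 (zaut z2 x).
Proof. apply ziter_add; assumption. Qed.

Definition sd_mul (x y : K * Z) : K * Z :=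
  (gmul (fst x) (zaut (snd x) (fst y)), (snd x + snd y)%Z).
Definition sd_one : K * Z := (gone, 0%Z).
Definition sd_inv (x : K * Z) : K * Z := (zaut (- snd x) (ginv (fst x)), (- snd x)%Z).

Lemma sd_mulA x y z : sd_mul x (sd_mul y z) = sd_mul (sd_mul x y) z.
Proof.
  destruct x as [x1 x2], y as [y1 y2], z as [z1 z2]. unfold sd_mul; simpl.
  rewrite zaut_hom, zaut_add, gmulA, Z.add_assoc. reflexivity.
Qed.

Lemma sd_mul1 x : sd_mul sd_one x = x.
Proof. destruct x as [x1 x2]. unfold sd_mul; simpl. rewrite gmul1. reflexivity. Qed.

Lemma sd_mulg1 x : sd_mul x sd_one = x.
Proof.
  destruct x as [x1 x2]. unfold sd_mul; simpl.
  rewrite (hom_one _ _ _ (zaut_hom x2)), gmulg1, Z.add_0_r. reflexivity.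
Qed.

Lemma sd_mulV x : sd_mul (sd_inv x) x = sd_one.
Proof.
  destruct x as [x1 x2]. unfold sd_mul, sd_inv, sd_one; simpl.
  rewrite <- zaut_hom, gmulV, (hom_one _ _ _ (zaut_hom _)), Z.add_opp_diag_l. reflexivity.
Qed.

Lemma sd_mulgV x : sd_mul x (sd_inv x) = sd_one.
Proof.
  destruct x as [x1 x2]. unfold sd_mul, sd_inv, sd_one; simpl.
  rewrite <- zaut_add, Z.add_opp_diag_r. unfold zaut. simpl. rewrite gmulgV. reflexivity.
Qed.

Definition sdprod_Z : group :=
  Group (K * Z) sd_mul sd_one sd_inv sd_mulA sd_mul1 sd_mulg1 sd_mulV sd_mulgV.

Lemma sdprod_mul u v z1 z2 :
  @gmul sdprod_Z (u, z1) (v, z2) = (gmul u (zaut z1 v), (z1 + z2)%Z).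
Proof. reflexivity. Qed.

Lemma sdprod_mul_inv u v z :
  @gmul sdprod_Z (u, z) (@ginv sdprod_Z (v, z)) = (gmul u (ginv v), 0%Z).
Proof.
  simpl. unfold sd_mul, sd_inv; simpl. rewrite <- zaut_add, Z.add_opp_diag_r.
  reflexivity.
Qed.

End SemidirectByZ.

(** * Groups presented by chains of conjugations *)

Definition prefix {G : group} (x : nat -> G) (n : nat) : G := gprod (fun i => x (pred i)) n.

Lemma prefix_S (G : group) (x : nat -> G) n : prefix x (S n) = gmul (prefix x n) (x n).
Proof. reflexivity. Qed.

Lemma gprod_ext (G : group) (f g : nat -> G) n :
  (forall i, 1 <= i <= n -> f i = g i) -> gprod f n = gprod g n.
Proof.
  induction n as [|n IH]; intro E; simpl; [reflexivity|].
  rewrite IH by (intros; apply E; lia). rewrite E by lia. reflexivity.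
Qed.

Lemma prefix_ext (G : group) (x y : nat -> G) n :
  (forall i, i < n -> x i = y i) -> prefix x n = prefix y n.
Proof. intro E. apply gprod_ext. intros i Hi. apply E. lia. Qed.

Lemma prefix_add (G : group) (x : nat -> G) n j :
  prefix x (n + j) = gmul (prefix x n) (gprod (fun l => x (n + pred l)) j).
Proof.
  induction j as [|j IH]; simpl.
  - rewrite Nat.add_0_r, gmulg1. reflexivity.
  - rewrite Nat.add_succ_r, prefix_S, IH, gmulA. reflexivity.
Qed.

Lemma prefix_hom (G K : group) (f : G -> K) (x : nat -> G) n :
  is_hom G K f -> f (prefix x n) = prefix (fun i => f (x i)) n.
Proof.
  intro Hf. induction n as [|n IH]; [apply (hom_one _ _ _ Hf)|].
  rewrite !prefix_S, Hf, IH. reflexivity.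
Qed.

Lemma prefix_telescope (G : group) (x u : nat -> G) n :
  (forall i, i < n -> x i = gmul (u i) (ginv (u (S i)))) ->
  prefix x n = gmul (u 0) (ginv (u n)).
Proof.
  induction n as [|n IH]; intro E; simpl; [symmetry; apply gmulgV|].
  rewrite prefix_S, IH by (intros; apply E; lia). rewrite E by lia. gsimpl. reflexivity.
Qed.

(* The relators [a_{s(n)} a_{n+1} = a_{n+1} a_n], [1 <= n <= N], indexed by [i = n - 1]
   with [sigma i = s(n) - 1]. *)
Definition chain_rels (N : nat) (sigma : nat -> nat) (G : group) (a : nat -> G) : Prop :=
  forall i, i < N -> gmul (a (sigma i + 1)) (a (i + 2)) = gmul (a (i + 2)) (a (i + 1)).

Definition chain_universal (N : nat) (sigma : nat -> nat) (G : group) (a : nat -> G) : Prop :=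
  forall (H : group) (b : nat -> H), chain_rels N sigma H b ->
    (exists f : G -> H, is_hom G H f /\ forall i, 1 <= i <= N + 1 -> f (a i) = b i) /\
    (forall f1 f2 : G -> H, is_hom G H f1 -> is_hom G H f2 ->
       (forall i, 1 <= i <= N + 1 -> f1 (a i) = b i) ->
       (forall i, 1 <= i <= N + 1 -> f2 (a i) = b i) ->
       forall x, f1 x = f2 x).

Section ChainModel.
Variables (N : nat) (sigma : nat -> nat).
Hypothesis sigma_le : forall i, sigma i <= i.

Definition monodromy_gen (i : nat) : free_group :=
  if i <? N then gmul (prefix fg_gen (S i)) (ginv (prefix fg_gen (sigma i))) else fg_gen i.

Definition monodromy : free_group -> free_group := fg_lift _ monodromy_gen.

(* [unwind n n] will be the preimage of [prefix fg_gen n] under the monodromy;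
   the fuel makes the recursion through [sigma] structural. *)
Fixpoint unwind (fuel n : nat) : free_group :=
  match fuel, n with
  | S f, S i => gmul (fg_gen i) (unwind f (sigma i))
  | _, _ => gone
  end.

Definition unwound (n : nat) : free_group := unwind n n.

Definition monodromy_inv_gen (i : nat) : free_group :=
  if i <? N then gmul (ginv (unwound i)) (unwound (S i)) else fg_gen i.

Definition monodromy_inv : free_group -> free_group := fg_lift _ monodromy_inv_gen.

Lemma unwind_fuel f1 f2 n : n <= f1 -> n <= f2 -> unwind f1 n = unwind f2 n.
Proof.
  revert f2 n.
  induction f1 as [|f1 IH]; intros [|f2] [|i] H1 H2; simpl; try reflexivity; try lia.
  rewrite (IH f2); [reflexivity| |]; pose proof (sigma_le i); lia.
Qed.

Lemma unwound_S i : unwound (S i) = gmul (fg_gen i) (unwound (sigma i)).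
Proof. unfold unwound. simpl. rewrite (unwind_fuel i (sigma i)); auto. Qed.

Lemma monodromy_hom : is_hom _ _ monodromy.
Proof. apply fg_lift_hom. Qed.

Lemma monodromy_inv_hom : is_hom _ _ monodromy_inv.
Proof. apply fg_lift_hom. Qed.

Lemma monodromy_fg_gen i : monodromy (fg_gen i) = monodromy_gen i.
Proof. apply fg_lift_gen. Qed.

Lemma monodromy_inv_fg_gen i : monodromy_inv (fg_gen i) = monodromy_inv_gen i.
Proof. apply fg_lift_gen. Qed.

Lemma monodromy_inv_prefix n : n <= N -> monodromy_inv (prefix fg_gen n) = unwound n.
Proof.
  induction n as [|n IH]; intro Hn; [apply (hom_one _ _ _ monodromy_inv_hom)|].
  rewrite prefix_S, monodromy_inv_hom, monodromy_inv_fg_gen, IH by lia. unfold monodromy_inv_gen.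
  destruct (Nat.ltb_spec n N); [|lia]. gsimpl. reflexivity.
Qed.

Lemma monodromy_unwound n : n <= N -> monodromy (unwound n) = prefix fg_gen n.
Proof.
  induction n as [n IH] using lt_wf_ind. intro Hn.
  destruct n as [|i]; [apply (hom_one _ _ _ monodromy_hom)|]. pose proof (sigma_le i).
  rewrite unwound_S, monodromy_hom, monodromy_fg_gen, IH by lia. unfold monodromy_gen.
  destruct (Nat.ltb_spec i N); [|lia]. gsimpl. reflexivity.
Qed.

Lemma monodromy_invK w : monodromy_inv (monodromy w) = w.
Proof.
  revert w. apply fg_hom_ext.
  - intros u v. rewrite monodromy_hom. apply monodromy_inv_hom.
  - intros u v. reflexivity.
  - intro i. rewrite monodromy_fg_gen. unfold monodromy_gen.
    destruct (Nat.ltb_spec i N).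
    + pose proof (sigma_le i).
      rewrite monodromy_inv_hom, (hom_inv _ _ _ _ monodromy_inv_hom), !monodromy_inv_prefix,
        unwound_S by lia.
      gsimpl. reflexivity.
    + rewrite monodromy_inv_fg_gen. unfold monodromy_inv_gen.
      destruct (Nat.ltb_spec i N); [lia|reflexivity].
Qed.

Lemma monodromyK w : monodromy (monodromy_inv w) = w.
Proof.
  revert w. apply fg_hom_ext.
  - intros u v. rewrite monodromy_inv_hom. apply monodromy_hom.
  - intros u v. reflexivity.
  - intro i. rewrite monodromy_inv_fg_gen. unfold monodromy_inv_gen.
    destruct (Nat.ltb_spec i N).
    + rewrite monodromy_hom, (hom_inv _ _ _ _ monodromy_hom), !monodromy_unwound by lia.
      rewrite prefix_S. gsimpl. reflexivity.
    + rewrite monodromy_fg_gen. unfold monodromy_gen.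
      destruct (Nat.ltb_spec i N); [lia|reflexivity].
Qed.

Definition chain_model : group :=
  sdprod_Z free_group monodromy monodromy_inv monodromy_hom monodromy_invK monodromyK.

(* [a_n] is modelled by [(prefix fg_gen (n-1))^-1 t], where [t = (1, 1)] generates [Z]. *)
Definition model_gen (n : nat) : chain_model := (ginv (prefix fg_gen (pred n)), 1%Z).

Lemma model_rels : chain_rels N sigma chain_model model_gen.
Proof.
  intros i Hi. unfold model_gen, chain_model. rewrite !Nat.add_succ_r, !Nat.add_0_r.
  simpl pred. rewrite !sdprod_mul, !zaut_one. f_equal.
  rewrite !(hom_inv _ _ _ _ monodromy_hom), (prefix_S _ _ i) at 1.
  rewrite monodromy_hom, monodromy_fg_gen. unfold monodromy_gen.
  destruct (Nat.ltb_spec i N); [|lia]. gsimpl. reflexivity.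
Qed.

End ChainModel.

Section ChainGroup.
Variables (N : nat) (sigma : nat -> nat).
Hypothesis sigma_le : forall i, sigma i <= i.
Variables (G : group) (a : nat -> G) (x : nat -> G).
Hypothesis rels : chain_rels N sigma G a.
Hypothesis x_def : forall i, i < N -> x i = gmul (ginv (a (i + 2))) (a (sigma i + 1)).

Lemma chain_basis_telescopes i : i < N -> x i = gmul (a (i + 1)) (ginv (a (i + 2))).
Proof.
  intro Hi. rewrite x_def by exact Hi. apply (gmul_cancel_l _ (a (i + 2))).
  rewrite !gmulA, <- rels by exact Hi. gsimpl. reflexivity.
Qed.

Lemma chain_prefix n : n <= N -> prefix x n = gmul (a 1) (ginv (a (n + 1))).
Proof.
  intro Hn. apply (prefix_telescope _ _ (fun i => a (i + 1))). intros i Hi.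
  rewrite chain_basis_telescopes by lia. replace (S i + 1) with (i + 2) by lia. reflexivity.
Qed.

Lemma chain_conj i :
  i < N -> conj1 a (x i) = gmul (prefix x (S i)) (ginv (prefix x (sigma i))).
Proof.
  intro Hi. pose proof (sigma_le i). rewrite !chain_prefix, x_def by lia.
  replace (S i + 1) with (i + 2) by lia. unfold conj1. gsimpl. reflexivity.
Qed.

Definition realize : free_group -> G := fg_lift G (fun i => if i <? N then x i else gone).

Lemma realize_hom : is_hom _ _ realize.
Proof. apply fg_lift_hom. Qed.

Lemma realize_gen i : realize (fg_gen i) = if i <? N then x i else gone.
Proof. apply fg_lift_gen. Qed.

Lemma realize_prefix n : n <= N -> realize (prefix fg_gen n) = prefix x n.
Proof.
  intro Hn. rewrite prefix_hom by exact realize_hom. apply prefix_ext. intros i Hi.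
  rewrite realize_gen. destruct (Nat.ltb_spec i N); [reflexivity|lia].
Qed.

Lemma realize_monodromy w :
  realize (monodromy N sigma w) = gmul (gmul (a 1) (realize w)) (ginv (a 1)).
Proof.
  revert w. apply fg_hom_ext.
  - intros u v. rewrite monodromy_hom. apply realize_hom.
  - intros u v. rewrite realize_hom. gsimpl. reflexivity.
  - intro i. rewrite monodromy_fg_gen, realize_gen. unfold monodromy_gen.
    destruct (Nat.ltb_spec i N).
    + pose proof (sigma_le i).
      rewrite realize_hom, (hom_inv _ _ _ _ realize_hom), !realize_prefix by lia.
      symmetry. apply chain_conj. assumption.
    + rewrite realize_gen. destruct (Nat.ltb_spec i N); [lia|]. gsimpl. reflexivity.
Qed.

Lemma realize_monodromy_inv w :
  realize (monodromy_inv N sigma w) = gmul (gmul (ginv (a 1)) (realize w)) (a 1).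
Proof.
  rewrite <- (monodromyK N sigma sigma_le w) at 2. rewrite realize_monodromy.
  gsimpl. reflexivity.
Qed.

Lemma realize_zaut z w :
  realize (zaut _ (monodromy N sigma) (monodromy_inv N sigma) z w)
  = gmul (gmul (zpow (a 1) z) (realize w)) (ginv (zpow (a 1) z)).
Proof.
  revert w. induction z as [|z IH|z IH] using Z.peano_ind; intro w.
  - simpl. gsimpl. reflexivity.
  - unfold zaut. rewrite ziter_succ by apply monodromyK, sigma_le.
    fold (zaut _ (monodromy N sigma) (monodromy_inv N sigma) z).
    rewrite realize_monodromy, IH, zpow_succ_l. gsimpl. reflexivity.
  - unfold zaut. rewrite ziter_pred by apply monodromy_invK, sigma_le.
    fold (zaut _ (monodromy N sigma) (monodromy_inv N sigma) z).
    rewrite realize_monodromy_inv, IH, zpow_pred_l. gsimpl. reflexivity.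
Qed.

Hypothesis univ : chain_universal N sigma G a.

Definition realize_model (p : chain_model N sigma sigma_le) : G :=
  gmul (realize (fst p)) (zpow (a 1) (snd p)).

Lemma realize_model_hom : is_hom _ G realize_model.
Proof.
  intros [w1 z1] [w2 z2]. unfold chain_model. rewrite sdprod_mul.
  unfold realize_model; simpl.
  rewrite realize_hom, realize_zaut, zpow_add. gsimpl. reflexivity.
Qed.

Lemma realize_model_gen n :
  1 <= n <= N + 1 -> realize_model (model_gen N sigma sigma_le n) = a n.
Proof.
  intro Hn. unfold realize_model, model_gen; simpl.
  rewrite (hom_inv _ _ _ _ realize_hom), realize_prefix, chain_prefix by lia.
  replace (pred n + 1) with n by lia. gsimpl. reflexivity.
Qed.

Lemma chain_model_embedding :
  exists pi : G -> chain_model N sigma sigma_le, is_hom _ _ pi /\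
    (forall n, 1 <= n <= N + 1 -> pi (a n) = model_gen N sigma sigma_le n) /\
    (forall g, realize_model (pi g) = g).
Proof.
  destruct (univ _ _ (model_rels N sigma sigma_le)) as [[pi [pi_hom pi_gen]] _].
  exists pi. split; [exact pi_hom|]. split; [exact pi_gen|].
  destruct (univ G a rels) as [_ uniq].
  apply (uniq (fun g => realize_model (pi g)) (fun g => g)).
  - intros g h. rewrite pi_hom. apply realize_model_hom.
  - intros g h. reflexivity.
  - intros n Hn. rewrite pi_gen, realize_model_gen by exact Hn. reflexivity.
  - intros n _. reflexivity.
Qed.

Lemma realize_in_subgroup w : gen_fam N x (realize w).
Proof.
  apply fg_lift_in_gen. intro i. destruct (Nat.ltb_spec i N).
  - apply gen_base. exists i. auto.
  - apply gen_one.
Qed.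

Lemma chain_decompose g : exists w z, gen_fam N x w /\ g = gmul w (zpow (a 1) z).
Proof.
  destruct chain_model_embedding as (pi & _ & _ & realize_model_pi).
  exists (realize (fst (pi g))), (snd (pi g)). split; [apply realize_in_subgroup|].
  symmetry. apply realize_model_pi.
Qed.

Lemma chain_degree :
  exists f : G -> Z, (forall g h, f (gmul g h) = (f g + f h)%Z) /\
                     forall i, 1 <= i <= N + 1 -> f (a i) = 1%Z.
Proof.
  destruct chain_model_embedding as (pi & pi_hom & pi_gen & _).
  exists (fun g => snd (pi g)). split.
  - intros g h. rewrite pi_hom. reflexivity.
  - intros i Hi. rewrite pi_gen by exact Hi. reflexivity.
Qed.

Section Degree.
Variable f : G -> Z.
Hypotheses (f_hom : forall g h, f (gmul g h) = (f g + f h)%Z)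
  (f_gen : forall i, 1 <= i <= N + 1 -> f (a i) = 1%Z).

Lemma chain_kernel g : f g = 0%Z <-> gen_fam N x g.
Proof.
  assert (f_basis : forall h, gen_fam N x h -> f h = 0%Z).
  { intros h Hh. induction Hh as [h [i [Hi ->]]| |h1 h2 _ IH1 _ IH2|h _ IH].
    - pose proof (sigma_le i).
      rewrite x_def, f_hom, zhom_inv, !f_gen by (assumption || lia). lia.
    - apply zhom_one, f_hom.
    - rewrite f_hom, IH1, IH2. reflexivity.
    - rewrite zhom_inv, IH by exact f_hom. reflexivity. }
  split; [|apply f_basis].
  destruct (chain_decompose g) as (w & z & Hw & ->). intro Hg.
  rewrite f_hom, zhom_zpow, f_basis, f_gen in Hg by (assumption || lia).
  replace z with 0%Z by lia. simpl. rewrite gmulg1. exact Hw.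
Qed.

Lemma chain_zpow_in_subgroup z : gen_fam N x (zpow (a 1) z) -> zpow (a 1) z = gone.
Proof.
  rewrite <- chain_kernel. intro Hz. rewrite zhom_zpow, f_gen in Hz by (assumption || lia).
  replace z with 0%Z by lia. reflexivity.
Qed.

Lemma chain_normal g h : gen_fam N x h -> gen_fam N x (gmul (gmul g h) (ginv g)).
Proof.
  rewrite <- !chain_kernel. intro Hh. rewrite !f_hom, zhom_inv, Hh by exact f_hom. lia.
Qed.

End Degree.

Lemma chain_free : freely_generates N x.
Proof.
  destruct chain_model_embedding as (pi & pi_hom & pi_gen & _).
  assert (pi_basis : forall g, gen_fam N x g -> snd (pi g) = 0%Z).
  { intros g Hg. apply (chain_kernel (fun g => snd (pi g))); [| |exact Hg].
    - intros u v. rewrite pi_hom. reflexivity.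
    - intros i Hi. rewrite pi_gen by exact Hi. reflexivity. }
  assert (pi_x : forall i, i < N -> fst (pi (x i)) = fg_gen i).
  { intros i Hi.
    rewrite chain_basis_telescopes, pi_hom, (hom_inv _ _ _ _ pi_hom), !pi_gen
      by (assumption || lia).
    unfold model_gen, chain_model. rewrite sdprod_mul_inv. cbn [fst].
    replace (pred (i + 2)) with (S i) by lia. replace (pred (i + 1)) with i by lia.
    rewrite prefix_S. gsimpl. reflexivity. }
  intros K t. split.
  - exists (fun g => fg_lift K t (fst (pi g))). split.
    + intros g h Hg Hh. rewrite pi_hom.
      pose proof (pi_basis g Hg) as Eg. destruct (pi g) as [u zg]. simpl in Eg. subst zg.
      destruct (pi h) as [v zh]. apply fg_lift_hom.
    + intros i Hi. rewrite pi_x by exact Hi. apply fg_lift_gen.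
  - intros f1 f2 H1 H2 E1 E2. apply (gen_hom_ext _ _ _ f1 f2 H1 H2).
    intros g [i [Hi ->]]. rewrite E1, E2 by exact Hi. reflexivity.
Qed.

End ChainGroup.

(** * The groups G_{m,k} *)

Definition gmk_sigma (m i : nat) : nat := if i <? m then i else i - m.

Lemma gmk_sigma_le m i : gmk_sigma m i <= i.
Proof. unfold gmk_sigma. destruct (Nat.ltb_spec i m); lia. Qed.

Lemma Gmk_rels_chain m k (G : group) (a : nat -> G) :
  Gmk_rels m k G a <-> chain_rels (m + k) (gmk_sigma m) G a.
Proof.
  unfold Gmk_rels, chain_rels, gmk_sigma. split.
  - intros [RA RB] i Hi. destruct (Nat.ltb_spec i m).
    + replace (i + 2) with (i + 1 + 1) by lia. apply RA. lia.
    + specialize (RB (i - m + 1) ltac:(lia)).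
      replace (m + (i - m + 1) + 1) with (i + 2) in RB by lia.
      replace (m + (i - m + 1)) with (i + 1) in RB by lia.
      rewrite <- RB. gsimpl. reflexivity.
  - intro R. split.
    + intros i Hi. specialize (R (i - 1) ltac:(lia)).
      destruct (Nat.ltb_spec (i - 1) m); [|lia].
      replace (i - 1 + 1) with i in R by lia. replace (i - 1 + 2) with (i + 1) in R by lia.
      exact R.
    + intros j Hj. specialize (R (m + j - 1) ltac:(lia)).
      destruct (Nat.ltb_spec (m + j - 1) m); [lia|].
      replace (m + j - 1 - m + 1) with j in R by lia.
      replace (m + j - 1 + 2) with (m + j + 1) in R by lia.
      replace (m + j - 1 + 1) with (m + j) in R by lia.
      rewrite <- gmulA, R. gsimpl. reflexivity.
Qed.

Lemma Gmk_universal_chain m k (G : group) (a : nat -> G) :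
  presents_Gmk m k G a -> chain_universal (m + k) (gmk_sigma m) G a.
Proof. intros [_ U] H b Rb. apply U, Gmk_rels_chain, Rb. Qed.

Lemma basis_gmk m (G : group) (a : nat -> G) i :
  basis m a i = gmul (ginv (a (i + 2))) (a (gmk_sigma m i + 1)).
Proof.
  unfold basis, gmk_sigma, Aelt, Belt. destruct (Nat.ltb_spec i m).
  - replace (i + 1 + 1) with (i + 2) by lia. reflexivity.
  - replace (m + (i - m + 1) + 1) with (i + 2) by lia. reflexivity.
Qed.

Lemma gprod_Aelt m (G : group) (a : nat -> G) n :
  n <= m -> gprod (Aelt a) n = prefix (basis m a) n.
Proof.
  intro Hn. apply gprod_ext. intros i Hi. unfold basis.
  destruct (Nat.ltb_spec (pred i) m); [|lia]. f_equal. lia.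
Qed.

Lemma gprod_Belt m (G : group) (a : nat -> G) j :
  gprod (Belt m a) j = gmul (ginv (prefix (basis m a) m)) (prefix (basis m a) (m + j)).
Proof.
  rewrite prefix_add. gsimpl. apply gprod_ext. intros l Hl. unfold basis.
  destruct (Nat.ltb_spec (m + pred l) m); [lia|]. f_equal. lia.
Qed.

Section Gmk.
Variables (m k : nat) (G : group) (a : nat -> G).
Hypothesis rels : Gmk_rels m k G a.

Lemma Gmk_conj_basis i : i < m + k ->
  conj1 a (basis m a i)
  = gmul (prefix (basis m a) (S i)) (ginv (prefix (basis m a) (gmk_sigma m i))).
Proof.
  apply chain_conj; [apply gmk_sigma_le | apply Gmk_rels_chain, rels | intros; apply basis_gmk].
Qed.

Lemma Gmk_monodromy_A i : 1 <= i <= m ->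
  conj1 a (Aelt a i) =
  gmul (gmul (gprod (Aelt a) (i - 1)) (Aelt a i)) (ginv (gprod (Aelt a) (i - 1))).
Proof.
  intro Hi. replace (Aelt a i) with (basis m a (i - 1)).
  2: { unfold basis. destruct (Nat.ltb_spec (i - 1) m); [|lia]. f_equal. lia. }
  rewrite Gmk_conj_basis, (gprod_Aelt m) by lia. unfold gmk_sigma.
  destruct (Nat.ltb_spec (i - 1) m); [|lia]. rewrite prefix_S. gsimpl. reflexivity.
Qed.

Lemma Gmk_monodromy_B j : k <= m -> 1 <= j <= k ->
  conj1 a (Belt m a j) =
  gmul (gmul (gprod (Aelt a) m) (gprod (Belt m a) j)) (ginv (gprod (Aelt a) (j - 1))).
Proof.
  intros Hk Hj. replace (Belt m a j) with (basis m a (m + j - 1)).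
  2: { unfold basis. destruct (Nat.ltb_spec (m + j - 1) m); [lia|]. f_equal. lia. }
  rewrite Gmk_conj_basis, gprod_Belt, !(gprod_Aelt m) by lia. unfold gmk_sigma.
  destruct (Nat.ltb_spec (m + j - 1) m); [lia|].
  replace (S (m + j - 1)) with (m + j) by lia. replace (m + j - 1 - m) with (j - 1) by lia.
  gsimpl. reflexivity.
Qed.

End Gmk.

Lemma Gmk_embedding m k (G : group) (a : nat -> G) (G' : group) (a' : nat -> G') :
  k <= m -> presents_Gmk m k G a -> presents_Gmk m m G' a' ->
  exists iota : G -> G', is_hom G G' iota /\
    (forall i, 1 <= i <= m + k + 1 -> iota (a i) = a' i) /\
    (forall i, i < m + k -> iota (basis m a i) = basis m a' i) /\
    (forall x y, gen_fam (m + k) (basis m a) x -> gen_fam (m + k) (basis m a) y ->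
       iota x = iota y -> x = y).
Proof.
  intros hk HG HG'.
  assert (rels' : Gmk_rels m k G' a').
  { destruct (proj1 HG') as [RA RB]. split; [exact RA|]. intros j Hj. apply RB. lia. }
  destruct (proj2 HG G' a' rels') as [[iota [iota_hom iota_a]] _].
  assert (iota_basis : forall i, i < m + k -> iota (basis m a i) = basis m a' i).
  { intros i Hi. pose proof (gmk_sigma_le m i).
    rewrite !basis_gmk, iota_hom, (hom_inv _ _ _ _ iota_hom), !iota_a by lia. reflexivity. }
  exists iota. split; [exact iota_hom|]. split; [exact iota_a|]. split; [exact iota_basis|].
  apply (free_hom_injective _ _ _ (m + k) (m + m) _ (basis m a'));
    [exact iota_hom | lia | | exact iota_basis].
  apply (chain_free _ (gmk_sigma m) (gmk_sigma_le m) G' a').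
  - exact (proj1 (Gmk_rels_chain m m G' a') (proj1 HG')).
  - intros i _. apply basis_gmk.
  - exact (Gmk_universal_chain m m G' a' HG').
Qed.

Theorem proposition5p4 (m k : nat) (hm : 1 <= m) (hk : k <= m)
  (G : group) (a : nat -> G) (HG : presents_Gmk m k G a)
  (G' : group) (a' : nat -> G') (HG' : presents_Gmk m m G' a') :
  let F := gen_fam (m + k) (basis m a) in
  let F' := gen_fam (m + m) (basis m a') in
  (* the family A_1..A_m, B_1..B_k freely generates F *)
  freely_generates (m + k) (basis m a) /\
  (* F is normal *)
  (forall g x, F x -> F (gmul (gmul g x) (ginv g))) /\
  (* F is the kernel of the homomorphism G -> Z sending every a_i to 1 *)
  (exists f : G -> Z, (forall x y, f (gmul x y) = (f x + f y)%Z) /\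
                      forall i, 1 <= i <= m + k + 1 -> f (a i) = 1%Z) /\
  (forall f : G -> Z, (forall x y, f (gmul x y) = (f x + f y)%Z) ->
     (forall i, 1 <= i <= m + k + 1 -> f (a i) = 1%Z) ->
     forall x, f x = 0%Z <-> F x) /\
  (* G = F ⋊ <a_1>, with <a_1> infinite cyclic *)
  (forall z : Z, zpow (a 1) z = gone -> z = 0%Z) /\
  (forall z : Z, F (zpow (a 1) z) -> zpow (a 1) z = gone) /\
  (forall g : G, exists x z, F x /\ g = gmul x (zpow (a 1) z)) /\
  (* the monodromy phi(x) = a_1 x a_1^{-1} *)
  (forall i, 1 <= i <= m ->
     conj1 a (Aelt a i) =
     gmul (gmul (gprod (Aelt a) (i - 1)) (Aelt a i)) (ginv (gprod (Aelt a) (i - 1)))) /\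
  (forall j, 1 <= j <= k ->
     conj1 a (Belt m a j) =
     gmul (gmul (gprod (Aelt a) m) (gprod (Belt m a) j)) (ginv (gprod (Aelt a) (j - 1)))) /\
  (* phi_{m,k} is the restriction of phi_{m,m} to F_{m+k} <= F_{2m} *)
  (exists iota : G -> G',
     (forall x y, F x -> F y -> iota (gmul x y) = gmul (iota x) (iota y)) /\
     (forall x y, F x -> F y -> iota x = iota y -> x = y) /\
     (forall x, F x -> F' (iota x)) /\
     (forall i, 1 <= i <= m -> iota (Aelt a i) = Aelt a' i) /\
     (forall j, 1 <= j <= k -> iota (Belt m a j) = Belt m a' j) /\
     (forall x, F x -> iota (conj1 a x) = conj1 a' (iota x))).
Proof.
  intros F F'.
  pose proof (gmk_sigma_le m) as sigma_le.
  assert (x_def : forall i, i < m + k -> basis m a i = _) by (intros i _; apply basis_gmk).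
  pose proof (proj1 (Gmk_rels_chain m k G a) (proj1 HG)) as rels.
  pose proof (Gmk_universal_chain m k G a HG) as univ.
  destruct (chain_degree _ _ sigma_le G a _ rels x_def univ) as (deg & deg_hom & deg_gen).
  split; [exact (chain_free _ _ sigma_le G a _ rels x_def univ)|].
  split; [exact (chain_normal _ _ sigma_le G a _ rels x_def univ deg deg_hom deg_gen)|].
  split; [exists deg; auto|].
  split; [exact (chain_kernel _ _ sigma_le G a _ rels x_def univ)|].
  split; [intro z; apply (zpow_inj_of_degree _ deg deg_hom), deg_gen; lia|].
  split; [exact (chain_zpow_in_subgroup _ _ sigma_le G a _ rels x_def univ deg deg_hom deg_gen)|].
  split; [exact (chain_decompose _ _ sigma_le G a _ rels x_def univ)|].
  split; [exact (Gmk_monodromy_A m k G a (proj1 HG))|].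
  split; [intro j; exact (Gmk_monodromy_B m k G a (proj1 HG) j hk)|].
  destruct (Gmk_embedding m k G a G' a' hk HG HG')
    as (iota & iota_hom & iota_a & iota_basis & iota_inj).
  exists iota. split; [intros x y _ _; apply iota_hom|]. split; [exact iota_inj|]. split.
  - apply hom_gen; [exact iota_hom|]. intros x [i [Hi ->]].
    rewrite iota_basis by exact Hi. apply gen_base. exists i. split; [lia|reflexivity].
  - split; [|split];
      [intros i Hi; unfold Aelt | intros j Hj; unfold Belt | intros x _; unfold conj1];
      rewrite !iota_hom, (hom_inv _ _ _ _ iota_hom), !iota_a by lia; reflexivity.
Qed.
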